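(* For every type $\tau$ there is a unique construction scheme over $\omega$ of type $\tau$.
   Context: A type is a sequence $\tau=\{(m_k,n_{k+1},r_{k+1})\}_{k\in\omega}$ of natural numbers with $m_0=1$; $n_k\ge2$ for $k\ge1$; every $r\in\omega$ equals $r_k$ for infinitely many $k$; $m_k>r_{k+1}$; and $m_{k+1}=r_{k+1}+(m_k-r_{k+1})n_{k+1}$ for all $k$. For a set of ordinals $X$ and $\mathcal F\subseteq[X]^{<\omega}$, $\mathcal F_k$ is the set of elements of rank $k$ in the well-founded order $(\mathcal F,\subsetneq)$; $A\sqsubseteq B$ means $A\subseteq B$ and every element of $B$ below an element of $A$ is in $A$; $A<B$ means every element of $A$ is below every element of $B$. $\mathcal F$ is a construction scheme over $X$ of type $\tau$ if (1) every finite subset of $X$ lies in a member of $\mathcal F$; (2) $|F|=m_k$ for $F\in\mathcal F_k$; (3) $E\cap F\sqsubseteq E$ and $E\cap F\sqsubseteq F$ for $E,F\in\mathcal F_k$; (4) each $F\in\mathcal F_{k+1}$ is the union of uniquely determined $F_0,\dots,F_{n_{k+1}-1}\in\mathcal F_k$ forming a $\Delta$-system with root $R(F)$, $|R(F)|=r_{k+1}$, and $R(F)<F_0\setminus R(F)<\dots<F_{n_{k+1}-1}\setminus R(F)$. *)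

From mathcomp Require Import all_boot all_order.
From mathcomp Require Import finmap.
Set Implicit Arguments. Unset Strict Implicit. Unset Printing Implicit Defensive.

(* A type tau = {(m_k, n_{k+1}, r_{k+1})}_k, given by three sequences
   m n r : nat -> nat; the values n 0 and r 0 are irrelevant. *)
Definition is_type (m n r : nat -> nat) : Prop :=
  [/\ m 0 = 1,
      (forall k, 2 <= n k.+1),
      (forall r0 N, exists k, N < k /\ r k = r0),
      (forall k, (r k.+1 < m k)%N) &
      (forall k, m k.+1 = r k.+1 + (m k - r k.+1) * n k.+1)].

Local Open Scope fset_scope.

(* Rank of A in the well-founded order (F, proper inclusion):
   rank A = max { rank B + 1 | B in F, B proper subset of A }.
   Computed with fuel #|A| (proper subsets of A are strictly smaller). *)
Fixpoint rank_fuel (F : pred {fset nat}) (fuel : nat) (A : {fset nat}) : nat :=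
  match fuel with
  | 0 => 0
  | fuel'.+1 =>
      \max_(B <- enum_fset (fpowerset A) | (F B) && (B != A))
         (rank_fuel F fuel' B).+1
  end.

Definition rank (F : pred {fset nat}) (A : {fset nat}) : nat :=
  rank_fuel F #|`A| A.

Definition init_seg (A B : {fset nat}) : Prop :=
  A `<=` B /\ (forall x y, x \in B -> y \in A -> x < y -> x \in A).

Definition set_lt (A B : {fset nat}) : Prop :=
  forall x y, x \in A -> y \in B -> x < y.

Definition decomposition (m n r : nat -> nat) (F : pred {fset nat}) (k : nat)
    (A : {fset nat}) (s : seq {fset nat}) : Prop :=
  [/\ size s = n k.+1,
      (forall i, i < size s -> F (nth fset0 s i) /\ rank F (nth fset0 s i) = k),
      A = \bigcup_(B <- s) B &
      exists R : {fset nat},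
        [/\ #|`R| = r k.+1,
            (forall i j, i < size s -> j < size s -> i != j ->
               nth fset0 s i `&` nth fset0 s j = R),
            (forall i, i < size s -> set_lt R (nth fset0 s i `\` R)) &
            (forall i, i.+1 < size s ->
               set_lt (nth fset0 s i `\` R) (nth fset0 s i.+1 `\` R))]].

Definition construction_scheme (m n r : nat -> nat) (F : pred {fset nat}) : Prop :=
  [/\ (forall X : {fset nat}, exists A, F A /\ X `<=` A),
      (forall A, F A -> #|`A| = m (rank F A)),
      (forall E A, F E -> F A -> rank F E = rank F A ->
          init_seg (E `&` A) E /\ init_seg (E `&` A) A) &
      (forall k A, F A -> rank F A = k.+1 ->
          exists! s : seq {fset nat}, decomposition m n r F k A s)].

From mathcomp Require Import all_boot all_order.
From mathcomp Require Import finmap.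
From mathcomp Require Import zify.
From Stdlib Require Import ClassicalEpsilon.
Set Implicit Arguments. Unset Strict Implicit. Unset Printing Implicit Defensive.
Local Open Scope fset_scope.
Local Open Scope nat_scope.

(* Write [emb j i] for the map m_j -> m_{j+1} fixing the root [0, r_{j+1}) and
   translating the rest by i (m_j - r_{j+1}); for i < n_{j+1} their images form
   the Delta-system decomposing m_{j+1}.  The canonical scheme consists of the
   images of m_k under composites of these maps.  Clause (4) holds by
   construction, and clause (3) because two such images of the same rank can
   only share points through the roots, which are initial segments.

   Conversely, in any scheme F a decomposition of C consists of the root and of
   consecutive blocks of C of equal size, so the increasing enumeration of C
   turns [emb K i] into the enumeration of the i-th member.  By induction, the
   enumeration of a member of rank k + d maps every canonical set of rank k onto
   a member of F.  When that member contains [0, N), its enumeration is the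
   identity below N: hence canonical sets are in F, and each A in F equals such
   an image D, because D has the rank of A and contains max A, so that
   coherence forces A = D. *)

Definition fsort (C : {fset nat}) : seq nat := sort leq (enum_fset C).

Definition fnth (C : {fset nat}) (y : nat) : nat := nth 0 (fsort C) y.

Lemma fsort_sorted C : sorted ltn (fsort C).
Proof.
rewrite ltn_sorted_uniq_leq sort_uniq fset_uniq /=.
exact: (sort_sorted leq_total).
Qed.

Lemma size_fsort C : size (fsort C) = #|`C|.
Proof. by rewrite size_sort. Qed.

Lemma mem_fsort C x : (x \in fsort C) = (x \in C).
Proof. by rewrite mem_sort. Qed.

Lemma fnth_mem C y : y < #|`C| -> fnth C y \in C.
Proof. by move=> yC; rewrite -mem_fsort mem_nth ?size_fsort. Qed.

Lemma fnth_ltn C y z : y < z -> z < #|`C| -> fnth C y < fnth C z.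
Proof.
move=> yz zC; apply: (sorted_ltn_nth ltn_trans 0 (fsort_sorted C)) => //;
by rewrite inE size_fsort // (ltn_trans yz zC).
Qed.

Lemma fnthP C c : c \in C -> exists2 y, y < #|`C| & fnth C y = c.
Proof.
move=> cC; exists (index c (fsort C)); last by rewrite /fnth nth_index ?mem_fsort.
by rewrite -size_fsort index_mem mem_fsort.
Qed.

Lemma leq_fnth C y : y < #|`C| -> y <= fnth C y.
Proof.
elim: y => // y IH yC.
exact: leq_ltn_trans (IH (ltnW yC)) (fnth_ltn (ltnSn y) yC).
Qed.

Lemma fnth_prefix C N y : (forall x, x < N -> x \in C) -> y < N -> fnth C y = y.
Proof.
move=> sNC; elim/ltn_ind: y => y IH yN.
have [z zC zy] := fnthP (sNC y yN).
have := leq_fnth zC; rewrite zy leq_eqVlt => /predU1P [z_y|zlty].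
  by rewrite -{1}z_y.
by move: zy; rewrite IH ?(ltn_trans zlty yN) // => z_y; rewrite z_y ltnn in zlty.
Qed.

Lemma fset_has_max C : C != fset0 ->
  exists2 a, a \in C & forall x, x \in C -> x <= a.
Proof.
rewrite -cardfs_eq0 -lt0n => C0; exists (fnth C #|`C|.-1).
  by rewrite fnth_mem // prednK.
move=> x /fnthP [y yC <-]; move: yC; rewrite -{1}(prednK C0) ltnS.
by rewrite leq_eqVlt => /predU1P [-> //|?]; rewrite ltnW // fnth_ltn ?prednK.
Qed.

Lemma fsort_fsetU X Y : set_lt X Y -> fsort (X `|` Y) = fsort X ++ fsort Y.
Proof.
move=> XY; apply: (irr_sorted_eq ltn_trans ltnn (fsort_sorted _)).
  rewrite sorted_pairwise; last exact: ltn_trans.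
  rewrite pairwise_cat -!sorted_pairwise ?fsort_sorted ?andbT; try exact: ltn_trans.
  by apply/allrelP => x y; rewrite !mem_fsort; apply: XY.
by move=> z; rewrite mem_cat !mem_fsort in_fsetU.
Qed.

Lemma cardfsU_lt X Y : set_lt X Y -> #|`(X `|` Y)| = #|`X| + #|`Y|.
Proof. by move=> XY; rewrite -!size_fsort fsort_fsetU // size_cat. Qed.

Lemma fnth_fsetU X Y y : set_lt X Y ->
  fnth (X `|` Y) y = if y < #|`X| then fnth X y else fnth Y (y - #|`X|).
Proof. by move=> XY; rewrite /fnth fsort_fsetU // nth_cat size_fsort. Qed.

Section Blocks.
Variables (B : nat -> {fset nat}) (b N : nat).

Lemma bigfcup_index_iotaS M :
  \bigcup_(i <- index_iota 0 M.+1) B i = \bigcup_(i <- index_iota 0 M) B i `|` B M.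
Proof. exact: big_nat_recr. Qed.

Hypothesis card_B : forall j, j < N -> #|`B j| = b.
Hypothesis B_lt : forall i j, i < j < N -> set_lt (B i) (B j).

Lemma bigcup_blocks_lt M : M < N -> set_lt (\bigcup_(i <- index_iota 0 M) B i) (B M).
Proof.
move=> MN x y /bigfcupP [i]; rewrite mem_index_iota andbT => /andP [_ iM].
by apply: B_lt; rewrite iM.
Qed.

Lemma card_bigcup_blocks M : M <= N -> #|`\bigcup_(i <- index_iota 0 M) B i| = M * b.
Proof.
elim: M => [|M IH] MN; first by rewrite big_nil cardfs0.
rewrite bigfcup_index_iotaS cardfsU_lt; last exact: bigcup_blocks_lt.
by rewrite IH ?card_B ?mulSnr // ltnW.
Qed.

Lemma fnth_bigcup_blocks M j x : M <= N -> j < M -> x < b ->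
  fnth (\bigcup_(i <- index_iota 0 M) B i) (j * b + x) = fnth (B j) x.
Proof.
move=> + + xb; elim: M => // M IH MN jM.
rewrite bigfcup_index_iotaS fnth_fsetU; last exact: bigcup_blocks_lt.
rewrite card_bigcup_blocks; last exact: ltnW.
move: jM; rewrite ltnS leq_eqVlt => /predU1P [->|jM].
  by rewrite ltnNge leq_addr /= addKn.
have lt_jbx : j * b + x < M * b by nia.
by rewrite lt_jbx IH // ltnW.
Qed.
End Blocks.

Section Rank.
Variable F : pred {fset nat}.

Lemma rank_fuel_fset0 f : rank_fuel F f fset0 = 0.
Proof.
case: f => //= f; apply/eqP; rewrite -leqn0; apply/bigmax_leqP_seq => B.
by rewrite fpowersetE fsubset0 => /eqP ->; rewrite eqxx andbF.
Qed.

Lemma rank_fuel_enough f g A :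
  #|`A| <= f -> #|`A| <= g -> rank_fuel F f A = rank_fuel F g A.
Proof.
have empty (B : {fset nat}) : #|`B| <= 0 -> B = fset0.
  by rewrite leqn0 => /eqP /cardfs0_eq.
elim: f g A => [|f IH] [|g] A //.
- by move=> /empty -> _; rewrite !rank_fuel_fset0.
- by move=> _ /empty ->; rewrite !rank_fuel_fset0.
move=> Af Ag /=; rewrite big_seq_cond [in RHS]big_seq_cond; apply: eq_bigr => B.
rewrite fpowersetE => /andP [BA /andP [_ nBA]].
have ltBA : #|`B| < #|`A| by rewrite fproper_ltn_card // fproperEneq nBA.
by rewrite (IH g) // -ltnS (leq_trans ltBA).
Qed.

Lemma rankE A :
  rank F A = \max_(B <- enum_fset (fpowerset A) | F B && (B != A)) (rank F B).+1.
Proof.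
rewrite /rank; case cA: #|`A| => [|c].
  rewrite (cardfs0_eq cA) /= big1_seq // => B /andP [/andP [_ /negPf]].
  by rewrite fpowersetE fsubset0 => ->.
rewrite /= big_seq_cond [in RHS]big_seq_cond; apply: eq_bigr => B.
rewrite fpowersetE => /andP [BA /andP [_ nBA]].
have ltBA : #|`B| < #|`A| by rewrite fproper_ltn_card // fproperEneq nBA.
by rewrite (@rank_fuel_enough c #|`B|) // -ltnS -cA.
Qed.

Lemma rank_proper A B : F B -> B `<` A -> rank F B < rank F A.
Proof.
move=> FB BA; rewrite [rank F A]rankE; apply: (@leq_bigmax_seq _ _ _ (fun B => (rank F B).+1) B).
  by rewrite fpowersetE fproper_sub.
by rewrite FB (fproper_neq BA).
Qed.

Lemma rank_leq A k : (forall B, F B -> B `<` A -> rank F B < k) -> rank F A <= k.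
Proof.
move=> lt_k; rewrite rankE; apply/bigmax_leqP_seq => B.
rewrite fpowersetE => BA /andP [FB nBA]; apply: lt_k => //.
by rewrite fproperEneq nBA.
Qed.
End Rank.

Definition fimg (f : nat -> nat) (N : nat) : {fset nat} := [fset f x | x in iota 0 N].

Lemma fimgP f N y : reflect (exists2 x, x < N & y = f x) (y \in fimg f N).
Proof.
apply: (iffP idP) => [/imfsetP [x] | [x xN ->]].
  by rewrite /= mem_iota => /andP [_ xN] ->; exists x.
by apply/imfsetP; exists x; rewrite //= mem_iota.
Qed.

Lemma fimg_mem f N x : x < N -> f x \in fimg f N.
Proof. by move=> xN; apply/fimgP; exists x. Qed.

Lemma card_fimg f N : (forall x y, x < y < N -> f x < f y) -> #|`fimg f N| = N.
Proof.
move=> f_lt; rewrite card_in_imfset /=; first by rewrite undup_id ?iota_uniq // size_iota.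
move=> x y; rewrite /= !mem_iota !add0n /= => xN yN fxy.
case: (ltngtP x y) => // lt.
  by have := f_lt x y; rewrite lt yN fxy ltnn => /(_ isT).
by have := f_lt y x; rewrite lt xN fxy ltnn => /(_ isT).
Qed.

Lemma eq_fimg f g N : (forall x, x < N -> f x = g x) -> fimg f N = fimg g N.
Proof.
move=> fg; apply/fsetP => y; apply/fimgP/fimgP => -[x xN ->]; exists x => //.
  by rewrite fg.
by rewrite fg.
Qed.

Lemma fimg_fnth C : fimg (fnth C) #|`C| = C.
Proof.
apply/fsetP => y; apply/fimgP/idP => [[x xC ->]|/fnthP [x xC <-]]; first exact: fnth_mem.
by exists x.
Qed.

Definition precedes (B C : {fset nat}) : bool :=
  has (fun c => all (fun b => b < c) (enum_fset B)) (enum_fset C).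

Lemma precedesP B C :
  reflect (exists2 c, c \in C & forall b, b \in B -> b < c) (precedes B C).
Proof.
apply: (iffP hasP) => [[c cC /allP lt_c]|[c cC lt_c]]; exists c => //.
by apply/allP.
Qed.

Lemma precedes_trans : transitive precedes.
Proof.
move=> B A C /precedesP [b bB ltAb] /precedesP [c cC ltBc]; apply/precedesP.
by exists c => // a aA; apply: ltn_trans (ltAb a aA) (ltBc b bB).
Qed.

Lemma precedes_irr : irreflexive precedes.
Proof. by move=> B; apply/negP => /precedesP [c cB /(_ c cB)]; rewrite ltnn. Qed.

Section SchemesOfType.
Variables m n r : nat -> nat.
Hypothesis m0 : m 0 = 1.
Hypothesis n_ge2 : forall k, 2 <= n k.+1.
Hypothesis r_lt_m : forall k, r k.+1 < m k.
Hypothesis mS : forall k, m k.+1 = r k.+1 + (m k - r k.+1) * n k.+1.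

Lemma m_homo : {homo m : j k / j < k}.
Proof.
apply: (homo_ltn ltn_trans) => k; rewrite mS.
have := r_lt_m k; have := n_ge2 k; nia.
Qed.

Lemma leq_m : {mono m : j k / j <= k}.
Proof. exact: leq_mono m_homo. Qed.

Lemma ltn_m : {mono m : j k / j < k}.
Proof. exact: leqW_mono leq_m. Qed.

Lemma m_inj : injective m.
Proof. exact: incn_inj leq_m. Qed.

Lemma ltn_id_m k : k < m k.
Proof. by elim: k => [|k IH]; rewrite ?m0 // (leq_ltn_trans IH) ?ltn_m. Qed.

Definition emb j i x := if x < r j.+1 then x else x + i * (m j - r j.+1).

Lemma emb0 j x : emb j 0 x = x.
Proof. by rewrite /emb mul0n addn0 if_same. Qed.

Lemma emb_root j i x : x < r j.+1 -> emb j i x = x.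
Proof. by rewrite /emb => ->. Qed.

Lemma ltn_emb j i : {mono emb j i : x y / x < y}.
Proof.
apply: leqW_mono; apply: leq_mono => x y; rewrite /emb.
by case: ifP; case: ifP; nia.
Qed.

Lemma emb_lt_m j i x : x < m j -> i < n j.+1 -> emb j i x < m j.+1.
Proof.
rewrite /emb mS => xm iS; have := r_lt_m j.
by case: ifP; nia.
Qed.

Lemma emb_inj j i i' x y : x < m j -> y < m j -> emb j i x = emb j i' y ->
  x = y /\ (i = i' \/ x < r j.+1).
Proof.
rewrite /emb => xm ym; have := r_lt_m j.
case: ifP => xr; case: ifP => yr rm; try by nia.
move=> exy; suff ii' : i = i' by subst i'; split; [lia | left].
nia.
Qed.

Lemma emb_onto j y : y < m j.+1 ->
  exists i x, [/\ i < n j.+1, x < m j & emb j i x = y].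
Proof.
move=> ym; have := r_lt_m j; set a := r j.+1; set b := m j - a => ra.
have b_gt0 : 0 < b by rewrite subn_gt0.
have [ya | ay] := ltnP y a.
  by exists 0, y; rewrite emb0 (ltn_trans ya ra) (leq_trans _ (n_ge2 j)).
exists ((y - a) %/ b), (a + (y - a) %% b); split.
- by rewrite ltn_divLR // mulnC ltn_subLR // -mS.
- by rewrite -ltn_subRL -/b ltn_pmod.
- rewrite /emb -/a -/b ltnNge leq_addr /= (divn_eq (y - a) b); lia.
Qed.

Fixpoint branch k d (idx : nat -> nat) x :=
  if d is d'.+1 then emb (k + d') (idx (k + d')) (branch k d' idx x) else x.

Definition admissible k d (idx : nat -> nat) :=
  forall j, k <= j < k + d -> idx j < n j.+1.

Lemma admissible0 k idx : admissible k 0 idx.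
Proof. by move=> j; rewrite addn0 => /andP [kj jk]; have := leq_ltn_trans kj jk; rewrite ltnn. Qed.

Lemma admissible_le k d d' idx : d' <= d -> admissible k d idx -> admissible k d' idx.
Proof.
move=> d'd ok j /andP [kj jd']; apply: ok; rewrite kj.
by apply: leq_trans jd' _; rewrite leq_add2l.
Qed.

Lemma eq_branch k d idx idx' x :
  (forall j, k <= j < k + d -> idx j = idx' j) -> branch k d idx x = branch k d idx' x.
Proof.
elim: d => //= d IH eq_idx; rewrite eq_idx ?leq_addr ?addnS //= IH // => j /andP [kj jd].
by apply: eq_idx; rewrite kj addnS ltnW.
Qed.

Lemma ltn_branch k d idx : {mono branch k d idx : x y / x < y}.
Proof. by elim: d => //= d IH x y; rewrite ltn_emb IH. Qed.

Lemma branch_inj k d idx : injective (branch k d idx).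
Proof. by apply: incn_inj; apply: leq_mono => x y; rewrite ltn_branch. Qed.

Lemma branch_lt_m k d idx x : admissible k d idx -> x < m k -> branch k d idx x < m (k + d).
Proof.
elim: d => [|d IH] ok xm /=; first by rewrite addn0.
rewrite addnS emb_lt_m ?IH //; first exact: admissible_le ok.
by apply: ok; rewrite leq_addr addnS /=.
Qed.

Definition idx_upd k i (idx : nat -> nat) j := if j == k then i else idx j.

Lemma branch_upd k d i idx x :
  branch k d.+1 (idx_upd k i idx) x = branch k.+1 d idx (emb k i x).
Proof.
elim: d => [|d IH] /=; first by rewrite addn0 /idx_upd eqxx.
rewrite -IH /= addSnnS /idx_upd ifN //.
by rewrite neq_ltn addnS ltnS leq_addr orbT.
Qed.

Lemma admissible_upd k d i idx :
  admissible k.+1 d idx -> i < n k.+1 -> admissible k d.+1 (idx_upd k i idx).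
Proof.
move=> ok ik j /andP [kj jd]; rewrite /idx_upd; case: eqP => [-> //|/eqP jk].
by apply: ok; rewrite ltn_neqAle eq_sym jk kj addSnnS.
Qed.

Definition idx_pad k d (idx : nat -> nat) j := if j < k + d then idx j else 0.

Lemma branch_pad k d d' idx x : branch k (d + d') (idx_pad k d idx) x = branch k d idx x.
Proof.
elim: d' => [|d' IH] /=.
  by rewrite addn0; apply: eq_branch => j /andP [_ jd]; rewrite /idx_pad jd.
by rewrite addnS /= IH /idx_pad addnA ltnNge leq_addr /= emb0.
Qed.

Lemma admissible_pad k d d' idx : admissible k d idx -> admissible k (d + d') (idx_pad k d idx).
Proof.
move=> ok j /andP [kj _]; rewrite /idx_pad; case: ifP => jd; first by apply: ok; rewrite kj.
exact: leq_trans (n_ge2 j).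
Qed.

Lemma branch_onto k d y : y < m (k + d) ->
  exists2 idx, admissible k d idx & exists2 x, x < m k & branch k d idx x = y.
Proof.
elim: d y => [|d IH] y.
  by rewrite addn0 => yk; exists (fun=> 0); [exact: admissible0 | exists y].
rewrite addnS => /emb_onto [i [y' [ik y'm <-]]].
have [idx ok [x xk <-]] := IH y' y'm.
exists (idx_upd (k + d) i idx).
  move=> j /andP [kj]; rewrite addnS ltnS leq_eqVlt => /predU1P [->|jd].
    by rewrite /idx_upd eqxx.
  by rewrite /idx_upd (ltn_eqF jd); apply: ok; rewrite kj.
exists x => //=; rewrite {1}/idx_upd eqxx; congr emb; apply: eq_branch.
by move=> j /andP [_ jd]; rewrite /idx_upd (ltn_eqF jd).
Qed.

Definition canonical_set A :=
  exists k d idx, admissible k d idx /\ A = fimg (branch k d idx) (m k).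

Definition canonical : pred {fset nat} :=
  fun A => if excluded_middle_informative (canonical_set A) then true else false.

Lemma canonicalP A : canonical A <-> canonical_set A.
Proof. by rewrite /canonical; case: excluded_middle_informative. Qed.

Lemma card_fimg_branch k d idx : #|`fimg (branch k d idx) (m k)| = m k.
Proof. by apply: card_fimg => x y /andP [xy _]; rewrite ltn_branch. Qed.

Lemma rank_canonical k d idx :
  admissible k d idx -> rank canonical (fimg (branch k d idx) (m k)) = k.
Proof.
elim/ltn_ind: k d idx => k IH d idx ok; apply/eqP; rewrite eqn_leq; apply/andP; split.
  apply: rank_leq => _ /canonicalP [j [d' [idx' [ok' ->]]]] /fproper_ltn_card.
  rewrite !card_fimg_branch ltn_m => jk.
  by rewrite (IH j jk d' idx').
case: k IH ok => // k IH ok.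
have ok0 : admissible k d.+1 (idx_upd k 0 idx).
  by apply: admissible_upd ok _; apply: leq_trans (n_ge2 k).
set A := fimg _ (m k.+1); pose B := fimg (branch k d.+1 (idx_upd k 0 idx)) (m k).
have BA : B `<` A.
  rewrite fproperEneq; apply/andP; split.
    apply/negP => /eqP/(congr1 (fun A => #|`A|)).
    by rewrite !card_fimg_branch => /m_inj/eqP; rewrite ltn_eqF.
  apply/fsubsetP => y /fimgP [x xk ->]; rewrite branch_upd emb0.
  by apply: (fimg_mem (branch k.+1 d idx)); rewrite (ltn_trans xk) ?ltn_m.
have FB : canonical B by apply/canonicalP; exists k, d.+1, (idx_upd k 0 idx).
by have := rank_proper FB BA; rewrite (IH k (ltnSn k) _ _ ok0).
Qed.

Lemma card_canonical A : canonical A -> #|`A| = m (rank canonical A).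
Proof. by move/canonicalP => [k [d [idx [ok ->]]]]; rewrite card_fimg_branch rank_canonical. Qed.

Lemma canonical_cover X : exists A, canonical A /\ X `<=` A.
Proof.
have [N XN] : exists N, forall x, x \in X -> x < N.
  exists (\max_(x <- enum_fset X) x).+1 => x xX; rewrite ltnS.
  exact: (leq_bigmax_seq x (P := xpredT) (F := id)).
exists (fimg (branch N 0 (fun=> 0)) (m N)); split.
  by apply/canonicalP; exists N, 0, (fun=> 0); split => //; apply: admissible0.
apply/fsubsetP => x xX; apply/fimgP; exists x => //.
exact: ltn_trans (XN x xX) (ltn_id_m N).
Qed.

Lemma branch_below k d idx idx' u u' v :
  admissible k d idx -> admissible k d idx' -> u' < m k -> v < m k ->
  branch k d idx u < branch k d idx u' -> branch k d idx u' = branch k d idx' v ->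
  exists2 v', v' < m k & branch k d idx' v' = branch k d idx u.
Proof.
elim: d u u' v => [|d IH] u u' v ok ok' u'm vm /=.
  by move=> uu' _; exists u; rewrite // (ltn_trans uu').
have okd := admissible_le (leqnSn d) ok; have okd' := admissible_le (leqnSn d) ok'.
rewrite ltn_emb => uu' /emb_inj [||eq_u'v i_or_root]; try exact: branch_lt_m.
have [v' v'm eq_v'u] := IH u u' v okd okd' u'm vm uu' eq_u'v.
exists v' => //; rewrite eq_v'u; case: i_or_root => [-> //|u'r].
by rewrite !emb_root // (ltn_trans uu').
Qed.

Lemma init_seg_fimg_branch k d idx idx' :
  admissible k d idx -> admissible k d idx' ->
  init_seg (fimg (branch k d idx) (m k) `&` fimg (branch k d idx') (m k))
           (fimg (branch k d idx) (m k)).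
Proof.
move=> ok ok'; split; first exact: fsubsetIl.
move=> _ y /fimgP [u um ->]; rewrite in_fsetI.
move=> /andP [/fimgP [u' u'm ->] /fimgP [v vm eq_u'v]] uu'.
have [v' v'm eq_v'u] := branch_below ok ok' u'm vm uu' eq_u'v.
by rewrite in_fsetI (fimg_mem (branch k d idx)) // -eq_v'u (fimg_mem (branch k d idx')).
Qed.

Lemma fimg_branch_pad k d d' idx :
  fimg (branch k d idx) (m k) = fimg (branch k (d + d') (idx_pad k d idx)) (m k).
Proof. by apply: eq_fimg => x _; rewrite branch_pad. Qed.

Lemma canonical_coherent E A : canonical E -> canonical A ->
  rank canonical E = rank canonical A -> init_seg (E `&` A) E /\ init_seg (E `&` A) A.
Proof.
move=> /canonicalP [k [d [idx [ok ->]]]] /canonicalP [k' [d' [idx' [ok' ->]]]].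
rewrite !rank_canonical // => kk'; subst k'.
rewrite (fimg_branch_pad k d d' idx) (fimg_branch_pad k d' d idx') [d' + d]addnC.
have pad_ok := admissible_pad (d' := d') ok.
have pad_ok' := admissible_pad (d' := d) ok'; rewrite addnC in pad_ok'.
split; first exact: init_seg_fimg_branch.
by rewrite fsetIC; apply: init_seg_fimg_branch.
Qed.

Section CanonicalDecomposition.
Variables (k d : nat) (idx : nat -> nat).
Hypothesis ok : admissible k.+1 d idx.

Definition canonical_piece i := fimg (branch k.+1 d idx \o emb k i) (m k).

Definition canonical_root := fimg (branch k.+1 d idx) (r k.+1).

Definition canonical_pieces := [seq canonical_piece i | i <- iota 0 (n k.+1)].

Lemma canonical_piece_rank i : i < n k.+1 ->
  canonical (canonical_piece i) /\ rank canonical (canonical_piece i) = k.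
Proof.
move=> ik; have ok_i := admissible_upd ok ik.
have -> : canonical_piece i = fimg (branch k d.+1 (idx_upd k i idx)) (m k).
  by apply: eq_fimg => x _; rewrite branch_upd.
split; last exact: rank_canonical.
by apply/canonicalP; exists k, d.+1, (idx_upd k i idx).
Qed.

Lemma bigcup_canonical_pieces :
  fimg (branch k.+1 d idx) (m k.+1) = \bigcup_(B <- canonical_pieces) B.
Proof.
apply/fsetP => y; apply/fimgP/bigfcupP => [[z /emb_onto [i [x [ik xk <-]]] ->]|].
  by exists (canonical_piece i); rewrite ?map_f ?mem_iota //; apply: fimg_mem.
move=> [B /andP [/mapP [i]]]; rewrite mem_iota => /andP [_ ik] -> _ /fimgP [x xk ->].
by exists (emb k i x); rewrite ?emb_lt_m.
Qed.

Lemma root_sub_canonical_piece i : canonical_root `<=` canonical_piece i.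
Proof.
apply/fsubsetP => z /fimgP [x xr ->]; apply/fimgP; exists x; last by rewrite /= emb_root.
exact: ltn_trans (r_lt_m k).
Qed.

Lemma canonical_pieceI i j : i != j ->
  canonical_piece i `&` canonical_piece j = canonical_root.
Proof.
move=> ij; apply/eqP; rewrite eqEfsubset fsubsetI !root_sub_canonical_piece !andbT.
apply/fsubsetP => z; rewrite in_fsetI => /andP [/fimgP [x xk ->] /fimgP [y yk]].
move=> /branch_inj /(emb_inj xk yk) [_ [/eqP|xr]]; first by rewrite (negPf ij).
by rewrite /= emb_root //; apply: fimg_mem.
Qed.

Lemma mem_canonical_piece_root i y : y \in canonical_piece i `\` canonical_root ->
  exists2 x, r k.+1 <= x < m k & y = branch k.+1 d idx (x + i * (m k - r k.+1)).
Proof.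
rewrite in_fsetD => /andP [y_root /fimgP [x xk y_eq]].
have rx : r k.+1 <= x.
  by rewrite leqNgt; apply: contra y_root => xr; rewrite y_eq /= emb_root //; apply: fimg_mem.
by exists x; rewrite ?rx // y_eq /= /emb ltnNge rx.
Qed.

Lemma canonical_root_lt i : set_lt canonical_root (canonical_piece i `\` canonical_root).
Proof.
move=> z y /fimgP [x xr ->] /mem_canonical_piece_root [x' /andP [rx' _] ->].
by rewrite ltn_branch (leq_trans xr) // (leq_trans rx') ?leq_addr.
Qed.

Lemma canonical_piece_lt i :
  set_lt (canonical_piece i `\` canonical_root) (canonical_piece i.+1 `\` canonical_root).
Proof.
move=> y1 y2 /mem_canonical_piece_root [x /andP [_ xk] ->].
move=> /mem_canonical_piece_root [y /andP [ry _] ->].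
rewrite ltn_branch mulSn; lia.
Qed.

Lemma canonical_decomposition : exists s,
  decomposition m n r canonical k (fimg (branch k.+1 d idx) (m k.+1)) s.
Proof.
exists canonical_pieces.
have nth_s i : i < n k.+1 -> nth fset0 canonical_pieces i = canonical_piece i.
  by move=> ik; rewrite (nth_map 0) ?size_iota ?nth_iota.
split; rewrite ?size_map ?size_iota //.
- by move=> i ik; rewrite nth_s //; apply: canonical_piece_rank.
- exact: bigcup_canonical_pieces.
exists canonical_root; split.
- by apply: card_fimg => x y /andP [xy _]; rewrite ltn_branch.
- by move=> i j ik jk ij; rewrite !nth_s ?canonical_pieceI.
- by move=> i ik; rewrite nth_s //; apply: canonical_root_lt.
- by move=> i ik; rewrite !nth_s ?(ltnW ik) //; apply: canonical_piece_lt.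
Qed.
End CanonicalDecomposition.

Lemma decomposition_mem F k A s t : decomposition m n r F k A s ->
  t \in s -> F t /\ rank F t = k.
Proof.
by move=> [_ s_rank _ _] ts; rewrite -(nth_index fset0 ts); apply: s_rank; rewrite index_mem.
Qed.

Section SchemeAxioms.
Variable F : pred {fset nat}.
Hypothesis F_card : forall A, F A -> #|`A| = m (rank F A).
Hypothesis F_coherent : forall E A, F E -> F A -> rank F E = rank F A ->
  init_seg (E `&` A) E /\ init_seg (E `&` A) A.

Lemma eq_rank_max A D a : F A -> F D -> rank F A = rank F D ->
  a \in A -> (forall x, x \in A -> x <= a) -> a \in D -> A = D.
Proof.
move=> FA FD rAD aA le_a aD; have [[_ AD_init] _] := F_coherent FA FD rAD.
apply/eqP; rewrite eqEfcard (F_card FA) (F_card FD) rAD leqnn andbT.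
apply/fsubsetP => x xA; have := le_a x xA; rewrite leq_eqVlt => /predU1P [-> //|xa].
by have := AD_init x a xA; rewrite in_fsetI aA aD => /(_ isT xa); rewrite in_fsetI => /andP [].
Qed.

Lemma decomposition_sorted k A s : decomposition m n r F k A s -> sorted precedes s.
Proof.
move=> [_ s_rank _ [R [card_R _ R_lt s_lt]]]; apply/(sortedP fset0) => i iS.
have [Fi ri] := s_rank _ iS.
have [c cD] : exists c, c \in nth fset0 s i.+1 `\` R.
  apply/fset0Pn/negP; rewrite fsetD_eq0 => /fsubset_leq_card.
  by rewrite F_card // ri card_R leqNgt r_lt_m.
apply/precedesP; exists c; first by move: cD; rewrite in_fsetD => /andP [].
move=> b bi; have [bR | bR] := boolP (b \in R); first exact: (R_lt _ iS b c bR cD).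
by apply: (s_lt _ iS b c) => //; rewrite in_fsetD bR.
Qed.

Lemma decomposition_sub k A s s' : decomposition m n r F k A s ->
  decomposition m n r F k A s' -> {subset s' <= s}.
Proof.
move=> dec dec' t ts'; have [Ft rt] := decomposition_mem dec' ts'.
have [a at_ le_a] : exists2 a, a \in t & forall x, x \in t -> x <= a.
  apply: fset_has_max; rewrite -cardfs_eq0 F_card // rt -lt0n.
  by apply: leq_ltn_trans (r_lt_m k).
have : a \in A by case: dec' => _ _ -> _; apply/bigfcupP; exists t; rewrite ?ts'.
case: (dec) => _ _ -> _ => /bigfcupP [B /andP [Bs _] aB].
have [FB rB] := decomposition_mem dec Bs.
by rewrite (eq_rank_max Ft FB _ at_ le_a aB) ?rt ?rB.
Qed.

Lemma decomposition_uniq k A s s' : decomposition m n r F k A s ->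
  decomposition m n r F k A s' -> s = s'.
Proof.
move=> dec dec'.
have uniq_s' := sorted_uniq precedes_trans precedes_irr (decomposition_sorted dec').
have size_s : size s <= size s' by case: dec => -> _ _ _; case: dec' => -> _ _ _.
have [_ eq_ss'] := uniq_min_size uniq_s' (decomposition_sub dec dec') size_s.
apply: (irr_sorted_eq precedes_trans precedes_irr); rewrite ?eq_ss' //.
- exact: decomposition_sorted dec.
- exact: decomposition_sorted dec'.
Qed.
End SchemeAxioms.

Section DecompositionBlocks.
Variables (F : pred {fset nat}) (K : nat) (C R : {fset nat}) (s : seq {fset nat}).
Hypothesis F_card : forall A, F A -> #|`A| = m (rank F A).
Hypothesis size_s : size s = n K.+1.
Hypothesis s_rank : forall i, i < size s -> F (nth fset0 s i) /\ rank F (nth fset0 s i) = K.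
Hypothesis C_eq : C = \bigcup_(B <- s) B.
Hypothesis card_R : #|`R| = r K.+1.
Hypothesis sI : forall i j, i < size s -> j < size s -> i != j ->
  nth fset0 s i `&` nth fset0 s j = R.
Hypothesis R_lt : forall i, i < size s -> set_lt R (nth fset0 s i `\` R).
Hypothesis s_lt : forall i, i.+1 < size s ->
  set_lt (nth fset0 s i `\` R) (nth fset0 s i.+1 `\` R).

Let block j := nth fset0 s j `\` R.

Lemma root_sub_nth j : j < n K.+1 -> R `<=` nth fset0 s j.
Proof.
move=> jn; pose j' := if j == 0 then 1 else 0.
have j'n : j' < n K.+1 by rewrite (leq_ltn_trans _ (n_ge2 K)) // /j'; case: eqP.
have jj' : j != j' by rewrite /j'; case: (j).
by rewrite -(sI (i := j) (j := j')) ?size_s ?fsubsetIl.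
Qed.

Lemma nth_decompositionE j : j < n K.+1 -> nth fset0 s j = R `|` block j.
Proof.
move=> jn; apply/fsetP => y; rewrite in_fsetU in_fsetD.
by have [yR|] //= := boolP (y \in R); apply: (fsubsetP (root_sub_nth jn)).
Qed.

Lemma card_block j : j < n K.+1 -> #|`block j| = m K - r K.+1.
Proof.
move=> jn; have [Fj rj] : F (nth fset0 s j) /\ rank F (nth fset0 s j) = K.
  by apply: s_rank; rewrite size_s.
have := F_card Fj; rewrite rj nth_decompositionE // cardfsU_lt ?card_R => [<-|].
  by rewrite addKn.
by apply: R_lt; rewrite size_s.
Qed.

Lemma block_lt i j : i < j < n K.+1 -> set_lt (block i) (block j).
Proof.
elim: j => // j IH /andP [ij jn]; have jS : j.+1 < size s by rewrite size_s.
move: ij; rewrite ltnS leq_eqVlt => /predU1P [-> |ij]; first exact: s_lt.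
have [z zj] : exists z, z \in block j.
  apply/fset0Pn; rewrite -cardfs_eq0 card_block ?(ltnW jn) // subn_eq0 -ltnNge.
  exact: r_lt_m.
move=> x y xi yj; apply: ltn_trans (IH _ x z xi zj) (s_lt jS zj yj).
by rewrite ij ltnW.
Qed.

Lemma decomposition_blocksE : C = R `|` \bigcup_(j <- index_iota 0 (n K.+1)) block j.
Proof.
have n_gt0 : 0 < n K.+1 by apply: leq_trans (n_ge2 K).
rewrite C_eq; apply/fsetP => y; apply/bigfcupP/idP => [[B /andP [Bs _] yB]|].
  have jn : index B s < n K.+1 by rewrite -size_s index_mem.
  move: yB; rewrite -(nth_index fset0 Bs) nth_decompositionE // !in_fsetU => /orP [-> //|yj].
  by apply/orP; right; apply/bigfcupP; exists (index B s); rewrite ?mem_index_iota ?jn.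
rewrite in_fsetU => /orP [yR|/bigfcupP [j /andP [jn _]]].
  exists (nth fset0 s 0); first by rewrite mem_nth ?size_s.
  by rewrite nth_decompositionE // in_fsetU yR.
rewrite mem_index_iota in jn => yj; exists (nth fset0 s j); first by rewrite mem_nth ?size_s.
by rewrite nth_decompositionE // in_fsetU yj orbT.
Qed.

Lemma fnth_decomposition_blocks i x : i < n K.+1 -> x < m K ->
  fnth C (emb K i x) = fnth (nth fset0 s i) x.
Proof.
move=> iN xm; have R_lt_blocks : set_lt R (\bigcup_(j <- index_iota 0 (n K.+1)) block j).
  move=> y z yR /bigfcupP [j /andP [jn _]]; apply: R_lt => //.
  by move: jn; rewrite mem_index_iota size_s.
have R_lt_i : set_lt R (block i) by apply: R_lt; rewrite size_s.
rewrite decomposition_blocksE nth_decompositionE // !fnth_fsetU //.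
rewrite card_R; have [xr|rx] := ltnP x (r K.+1); first by rewrite emb_root // xr.
rewrite /emb !ltnNge rx (leq_trans rx (leq_addr _ _)) /= addnC -addnBA //.
apply: (fnth_bigcup_blocks (N := n K.+1)) => //; first exact: card_block.
  exact: block_lt.
by rewrite ltn_sub2r // (leq_ltn_trans rx xm).
Qed.
End DecompositionBlocks.

Lemma fnth_decomposition (F : pred {fset nat}) K C s i x :
  (forall A, F A -> #|`A| = m (rank F A)) ->
  decomposition m n r F K C s -> i < n K.+1 -> x < m K ->
  fnth C (emb K i x) = fnth (nth fset0 s i) x.
Proof.
move=> F_card [size_s s_rank C_eq [R [card_R sI R_lt s_lt]]].
exact: (fnth_decomposition_blocks F_card size_s s_rank C_eq card_R sI R_lt s_lt).
Qed.

Lemma canonical_decomposition_exists k A : canonical A -> rank canonical A = k.+1 ->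
  exists s, decomposition m n r canonical k A s.
Proof.
move=> /canonicalP [k' [d [idx [ok ->]]]]; rewrite rank_canonical // => kk'; subst k'.
exact: canonical_decomposition ok.
Qed.

Lemma canonical_scheme : construction_scheme m n r canonical.
Proof.
split.
- exact: canonical_cover.
- exact: card_canonical.
- exact: canonical_coherent.
- move=> k A FA rA; have [s dec] := canonical_decomposition_exists FA rA.
  by exists s; split => // s'; apply: (decomposition_uniq card_canonical canonical_coherent dec).
Qed.

Section Uniqueness.
Variable F : pred {fset nat}.
Hypothesis F_scheme : construction_scheme m n r F.

Lemma scheme_fimg_branch j d C idx : F C -> rank F C = j + d -> admissible j d idx ->
  F (fimg (fnth C \o branch j d idx) (m j)).
Proof.
have [_ F_card _ F_dec] := F_scheme.
elim: d C => [|d IH] C FC rC ok.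
  have -> : m j = #|`C| by rewrite F_card // rC addn0.
  by rewrite (eq_fimg (g := fnth C)) ?fimg_fnth.
move: rC; rewrite addnS => rC; have [s [dec _]] := F_dec _ _ FC rC.
have iN : idx (j + d) < n (j + d).+1 by apply: ok; rewrite leq_addr addnS /=.
have okd := admissible_le (leqnSn d) ok.
rewrite (eq_fimg (g := fnth (nth fset0 s (idx (j + d))) \o branch j d idx)); last first.
  by move=> x xj; rewrite /= (fnth_decomposition F_card dec) ?branch_lt_m.
have iS : idx (j + d) < size s by case: dec => ->.
by have [Fi ri] := decomposition_mem dec (mem_nth fset0 iS); apply: IH.
Qed.

Lemma scheme_prefix N :
  exists C, [/\ F C, N <= m (rank F C) & forall x, x < N -> x \in C].
Proof.
have [F_cover F_card _ _] := F_scheme.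
have [C [FC sub_C]] := F_cover (fimg id N).
exists C; split=> // [|x xN]; last by apply: (fsubsetP sub_C); apply: (fimg_mem id).
rewrite -F_card // -{1}(card_fimg (f := id) (N := N)) ?fsubset_leq_card //.
by move=> x y /andP [].
Qed.

Lemma canonical_sub_scheme A : canonical A -> F A.
Proof.
move=> /canonicalP [k [d [idx [ok ->]]]].
have [C [FC kdC prefix_C]] := scheme_prefix (m (k + d)).
rewrite leq_m in kdC; set d' := rank F C - (k + d).
have rC : rank F C = k + (d + d') by rewrite addnA subnKC.
have := scheme_fimg_branch FC rC (admissible_pad (d' := d') ok).
congr F; apply: eq_fimg => x xk /=.
by rewrite branch_pad (fnth_prefix prefix_C) ?branch_lt_m.
Qed.

Lemma scheme_sub_canonical A : F A -> canonical A.
Proof.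
have [_ F_card F_coherent _] := F_scheme.
move=> FA; have [a aA le_a] : exists2 a, a \in A & forall x, x \in A -> x <= a.
  by apply: fset_has_max; rewrite -cardfs_eq0 F_card // -lt0n (leq_ltn_trans _ (ltn_id_m _)).
have [C [FC aC prefix_C]] := scheme_prefix a.+1.
have kK : rank F A <= rank F C.
  rewrite -leq_m -(F_card _ FA) -(F_card _ FC) fsubset_leq_card //.
  by apply/fsubsetP => x xA; rewrite prefix_C // ltnS le_a.
have rC : rank F C = rank F A + (rank F C - rank F A) by rewrite subnKC.
move: aC; rewrite {1}rC => /branch_onto [idx ok [x0 x0k a_eq]].
set k := rank F A in rC ok x0k; set d := rank F C - k in rC ok a_eq.
have lt_C x : x < m k -> branch k d idx x < #|`C|.
  by move=> xk; rewrite F_card // rC branch_lt_m.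
set D := fimg (fnth C \o branch k d idx) (m k).
have FD : F D := scheme_fimg_branch FC rC ok.
have rD : rank F D = k.
  apply: m_inj; rewrite -F_card // card_fimg // => x y /andP [xy yk] /=.
  by rewrite fnth_ltn ?ltn_branch ?lt_C.
have aD : a \in D by rewrite -(fnth_prefix prefix_C (ltnSn a)) -a_eq (fimg_mem (fnth C \o _)).
have AD := eq_rank_max F_card F_coherent FA FD (esym rD) aA le_a aD.
apply/canonicalP; exists k, d, idx; split => //; rewrite AD; apply: eq_fimg => x xk /=.
apply: (fnth_prefix prefix_C); rewrite ltnS (leq_trans (leq_fnth (lt_C x xk))) // le_a //.
by rewrite AD (fimg_mem (fnth C \o _)).
Qed.

Lemma scheme_eq_canonical : F =1 canonical.
Proof.
move=> A; apply/idP/idP; first exact: scheme_sub_canonical.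
exact: canonical_sub_scheme.
Qed.
End Uniqueness.
End SchemesOfType.

Theorem mainTheorem19 (m n r : nat -> nat) :
  is_type m n r ->
  (exists F : pred {fset nat}, construction_scheme m n r F) /\
  (forall F G : pred {fset nat},
      construction_scheme m n r F -> construction_scheme m n r G -> F =1 G).
Proof.
(* Neither half needs every value of r to recur along the type. *)
move=> [m0 n_ge2 _ r_lt_m mS]; split.
  by exists (canonical m n r); apply: canonical_scheme.
move=> F G F_scheme G_scheme A.
rewrite (scheme_eq_canonical m0 n_ge2 r_lt_m mS F_scheme).
by rewrite (scheme_eq_canonical m0 n_ge2 r_lt_m mS G_scheme).
Qed.
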